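(* Let $k>l>0$ be coprime integers and $\lambda=\lambda_{k,l}$. Then the horizontal maximal cylinders of $X_\lambda$ form a cylinder decomposition, and the Veech group of $X_\lambda$ contains the parabolic element $$\begin{pmatrix}1&k(1+\lambda)\\0&1\end{pmatrix}.$$ It is the derivative of an affine homeomorphism that acts as the $k$-th power of a Dehn twist on the bottom horizontal cylinder (height $1$, circumference $1+\lambda$), and as the $l$-th power of a Dehn twist on each other horizontal cylinder (height $\lambda^{n}$, circumference $\lambda^{n-1}+\lambda^n+\lambda^{n+1}$, for $n\ge1$).
   Context: Notation: for $\lambda>0$ put $s_{-1}=0$ and $s_n=\sum_{i=0}^{n}\lambda^i$ for $n\ge 0$. Let $L_\lambda$ be the infinite polygonal path with consecutive vertices $(0,0),(s_0,0)$ and then, for $n\ge1$, the two vertices $(s_n,s_{n-2})$ and $(s_n,s_{n-1})$. Let $U_\lambda$ be its reflection in the line $y=x$. The \emph{ladder surface} $X_\lambda$ is the translation surface obtained from the open region bounded by $L_\lambda$ and $U_\lambda$ by identifying, via translation, each edge of $L_\lambda$ with the edge of $U_\lambda$ that is parallel to it and of the same length. Vertices are not points of $X_\lambda$. For coprime integers $k>l>0$, $\lambda_{k,l}$ denotes the positive solution of $k(\lambda+1)=l(\lambda^{-1}+1+\lambda)$. A cylinder of circumference $w$ and height $h$ is an open subset isometric to $\mathbb{R}/w\mathbb{Z}\times(0,h)$. A cylinder decomposition is a family of pairwise disjoint maximal cylinders whose closures cover the surface. An affine homeomorphism is one that is locally of the form $z\mapsto Az+t$ in translation charts; the matrix $A$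 is its derivative. The Veech group is the image in $\mathrm{PSL}(2,\mathbb{R})$ of the derivatives of orientation-preserving affine homeomorphisms of $X_\lambda$. *)

From HB Require Import structures.
From mathcomp Require Import all_boot all_order all_algebra.
From mathcomp Require Import reals.
Set Implicit Arguments. Unset Strict Implicit. Unset Printing Implicit Defensive.
Import Order.TTheory GRing.Theory Num.Theory.
Local Open Scope ring_scope.

(* Indexing convention: ss m = \sum_(i<m) lam^i, i.e. ss m = s_(m-1) in the
   paper's notation (so ss 0 = s_(-1) = 0, ss 1 = s_0 = 1, ...).
   Note m.-1 is truncated predecessor, so ss (0.-1) = ss 0 = 0. *)

Section Ladder.
Variable R : realType.
Variable lam : R.

Definition ss (m : nat) : R := \sum_(i < m) lam ^+ i.

(* The open region bounded by L_lam and U_lam:  y > g(x) and x > g(y), where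
   g(t) = ss (m-1) for ss m <= t < ss (m+1). *)
Definition in_region (p : R * R) : Prop :=
  exists m n : nat,
    [/\ ss m <= p.1 < ss m.+1, ss m.-1 < p.2,
        ss n <= p.2 < ss n.+1 & ss n.-1 < p.1].

Definition onLH (m : nat) (p : R * R) : Prop :=
  ss m < p.1 < ss m.+1 /\ p.2 = ss m.-1.
Definition onLV (n : nat) (p : R * R) : Prop :=
  (0 < n)%N /\ p.1 = ss n.+1 /\ ss n.-1 < p.2 < ss n.
Definition onUH (n : nat) (p : R * R) : Prop := onLV n (p.2, p.1).
Definition onUV (m : nat) (p : R * R) : Prop := onLH m (p.2, p.1).

(* Gluing by translation: L-horizontal edge m (length lam^m) is glued to the
   U-horizontal edge m+1 (length lam^m); L-vertical edge n (length lam^(n-1))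
   is glued to the U-vertical edge n-1 (length lam^(n-1)). *)
Definition glueLU (a b : R * R) : Prop :=
  (exists m, onLH m a /\ b = (a.1, a.2 + (ss m.+2 - ss m.-1))) \/
  (exists n, onLV n a /\ b = (a.1 - (ss n.+1 - ss n.-2), a.2)).

Definition onL (p : R * R) := (exists m, onLH m p) \/ (exists n, onLV n p).
Definition onU (p : R * R) := (exists n, onUH n p) \/ (exists m, onUV m p).
Definition inPoly (p : R * R) := [\/ in_region p, onL p | onU p].

(* Points of X_lam: we represent each point by a unique representative:
   region points and points of open L-edges (a point of an open U-edge is
   represented by its partner on L). *)
Definition inX (p : R * R) : Prop := in_region p \/ onL p.
Definition X := {p : R * R | inX p}.

Definition Rep (x : X) (p : R * R) : Prop := p = sval x \/ glueLU (sval x) p.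

Definition addv (p v : R * R) : R * R := (p.1 + v.1, p.2 + v.2).
Definition scalev (t : R) (v : R * R) : R * R := (t * v.1, t * v.2).

(* Dev x v y : y is reached from x by a straight segment with holonomy v
   drawn inside the polygon (from one representative of x).  For |v| small,
   v |-> y is the translation chart of X_lam at x. *)
Definition Dev (x : X) (v : R * R) (y : X) : Prop :=
  exists p, [/\ Rep x p, Rep y (addv p v) &
    forall t, 0 <= t <= 1 -> inPoly (addv p (scalev t v))].

Definition ball0 (e : R) (v : R * R) : Prop := v.1 ^+ 2 + v.2 ^+ 2 < e ^+ 2.

Definition mapply (A : 'M[R]_2) (v : R * R) : R * R :=
  (A 0 0 * v.1 + A 0 1 * v.2, A 1 0 * v.1 + A 1 1 * v.2).

Definition locally_affine (f : X -> X) (A : 'M[R]_2) : Prop :=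
  forall x, exists2 e, 0 < e &
    forall v y, ball0 e v -> Dev x v y -> Dev (f x) (mapply A v) (f y).

(* affine homeomorphism with derivative A (a bijective locally affine map is
   automatically a homeomorphism for the flat topology) *)
Definition affine_homeo (f : X -> X) (A : 'M[R]_2) : Prop :=
  bijective f /\ locally_affine f A.

(* M lies in the Veech group: its class in PSL(2,R) is the image of the
   derivative of an orientation-preserving affine homeomorphism. *)
Definition in_Veech (M : 'M[R]_2) : Prop :=
  exists (f : X -> X) (A : 'M[R]_2),
    [/\ affine_homeo f A, 0 < \det A & (A = M \/ A = - M)].

(* phi : R x (0,h) -> X is a horizontal cylinder chart of circumference w and
   height h: w-periodic and injective modulo w, and a local translation
   (hence a translation-isometry from R/wZ x (0,h) onto its image). *)
Definition horiz_cyl_chart (w h : R) (phi : R * R -> X) : Prop :=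
  [/\ 0 < w, 0 < h,
    (forall a b a' b', 0 < b < h -> 0 < b' < h ->
       (phi (a, b) = phi (a', b') <-> b = b' /\ exists z : int, a' = a + z%:~R * w)) &
    (forall a b, 0 < b < h -> exists2 e, 0 < e &
       forall v, ball0 e v -> Dev (phi (a, b)) v (phi (a + v.1, b + v.2)))].

Definition cyl_set (h : R) (phi : R * R -> X) (x : X) : Prop :=
  exists a b, 0 < b < h /\ x = phi (a, b).

Definition same_set (C D : X -> Prop) : Prop := forall x, C x <-> D x.

Definition is_horiz_cyl (C : X -> Prop) : Prop :=
  exists w h phi, horiz_cyl_chart w h phi /\ same_set C (cyl_set h phi).

Definition is_max_horiz_cyl (C : X -> Prop) : Prop :=
  is_horiz_cyl C /\
  forall D, is_horiz_cyl D -> (forall x, C x -> D x) -> same_set C D.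

Definition in_closure (C : X -> Prop) (x : X) : Prop :=
  forall e, 0 < e -> exists v y, [/\ ball0 e v, Dev x v y & C y].

Definition horiz_cyl_decomposition (F : (X -> Prop) -> Prop) : Prop :=
  [/\ forall C, F C -> is_max_horiz_cyl C,
      forall C D, F C -> F D -> (exists x, C x /\ D x) -> same_set C D &
      forall x, exists C, F C /\ in_closure C x].

(* In the chart phi (circumference w, height h), f acts as the m-th power of
   the (affine) Dehn twist (a, b) |-> (a + w b / h, b). *)
Definition twist_power (f : X -> X) (m : nat) (w h : R) (phi : R * R -> X) : Prop :=
  forall a b, 0 < b < h -> f (phi (a, b)) = phi (a + m%:R * w * b / h, b).

Definition band (n : nat) (x : X) : Prop := ss n < (sval x).2 < ss n.+1.

End Ladder.

Definition parabolic (R : realType) (c : R) : 'M[R]_2 :=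
  \matrix_(i < 2, j < 2) (if i == j then 1 else if (i == 0) && (j == 1) then c else 0).

Arguments ss {R} lam m.
Arguments in_region {R} lam p.
Arguments onLH {R} lam m p.
Arguments onLV {R} lam n p.
Arguments onUH {R} lam n p.
Arguments onUV {R} lam m p.
Arguments glueLU {R} lam a b.
Arguments onL {R} lam p.
Arguments onU {R} lam p.
Arguments inPoly {R} lam p.
Arguments inX {R} lam p.
Arguments X {R} lam.
Arguments Rep {R} lam x p.
Arguments Dev {R} lam x v y.
Arguments locally_affine {R} lam f A.
Arguments affine_homeo {R} lam f A.
Arguments in_Veech {R} lam M.
Arguments horiz_cyl_chart {R} lam w h phi.
Arguments cyl_set {R} lam h phi x.
Arguments same_set {R} lam C D.
Arguments is_horiz_cyl {R} lam C.
Arguments is_max_horiz_cyl {R} lam C.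
Arguments in_closure {R} lam C x.
Arguments horiz_cyl_decomposition {R} lam F.
Arguments twist_power {R} lam f m w h phi.
Arguments band {R} lam n x.

From Pilot Require Import Defs.
From HB Require Import structures.
From mathcomp Require Import all_boot all_order all_algebra.
From mathcomp Require Import boolp classical_sets reals.
From mathcomp Require Import zify ring lra.
(* Re-import Defs so that its addv is not shadowed by the one of vector.v. *)
Import Defs.
Set Implicit Arguments. Unset Strict Implicit. Unset Printing Implicit Defensive.
Import Order.TTheory GRing.Theory Num.Theory.
Local Open Scope ring_scope.

(* Write s_j = ss lam j = 1 + lam + ... + lam^(j-1).  The horizontal lines
   y = s_j ("cuts") split X_lam into the bands s_j < y < s_(j+1).  Inside
   band j the polygon is the strip s_(j-1) <= x <= s_(j+2), whose left side is
   glued by translation to its right side: band j is a horizontal cylinder of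
   height lam^j and circumference circ j = s_(j+2) - s_(j-1).

   Three results follow.
   - Each band is a horizontal cylinder; conversely, by connectedness, every
     horizontal cylinder chart avoids the cuts and lies in a single band.  So
     the maximal horizontal cylinders are exactly the bands, and they form a
     cylinder decomposition.
   - If c lam^j is an integer multiple of circ j for every j, the shear
     (x, y) |-> (x + c (y - s_j), y) on band j, identity on the cuts, is a
     bijection of X_lam, locally affine with derivative [[1, c], [0, 1]], and
     on band j it is the (c lam^j / circ j)-th power of the Dehn twist.
   - For lam = lam_(k,l) and c = k (1 + lam), the defining equation of lam
     gives c = k circ 0 and c lam^j = l circ j for j >= 1: mainTheorem6. *)

Section RealFacts.
Variable R : realType.

(* On an interval, a function that is locally constant near every point of
   [t1, t2] is constant: the supremum of the initial segments of [t1, t2] on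
   which g is constant cannot stop before t2. *)
Lemma loc_const_interval_le (lo hi : R) (g : R -> R) :
  (forall t, lo < t < hi -> exists2 e, 0 < e &
     forall d, `|d| < e -> lo < t + d < hi -> g (t + d) = g t) ->
  forall t1 t2, lo < t1 < hi -> lo < t2 < hi -> t1 <= t2 -> g t2 = g t1.
Proof.
move=> hloc t1 t2 /andP[l1 r1] /andP[l2 r2] h12.
pose S : set R := fun t => t1 <= t <= t2 /\ forall u, t1 <= u <= t -> g u = g t1.
have S1 : S t1.
  split; first by rewrite lexx h12.
  by move=> u /andP[a b]; have -> : u = t1 by apply/le_anti; rewrite a b.
have hs : has_sup S by split; [exists t1 | exists t2 => t [/andP[_ b] _]].
have sg1 : t1 <= sup S := sup_upper_bound hs S1.
have sg2 : sup S <= t2 by apply: ge_sup; [exists t1 | move=> t [/andP[_ b] _]].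
have [e e0 he] := hloc (sup S) (ltac:(apply/andP; split; lra)).
have [t [/andP[ht0 ht1] ht2] hte] := sup_adherent e0 hs.
have tsg : t <= sup S by apply: sup_upper_bound hs _ _; split => //; rewrite ht0 ht1.
have near_sup u : `|u - sup S| < e -> lo < u < hi -> g u = g (sup S).
  move=> hu hlu; have -> : u = sup S + (u - sup S) by ring.
  by apply: he => //; have -> : sup S + (u - sup S) = u by ring.
have extend u : t1 <= u -> u < sup S + e -> u <= t2 -> g u = g t1.
  move=> hu1 hu2 hu3; case: (leP u t) => hu; first by apply: ht2; rewrite hu1 hu.
  have gu : g u = g (sup S).
    by apply: near_sup; [rewrite ltr_norml|]; apply/andP; split; lra.
  have gt : g t = g (sup S).
    by apply: near_sup; [rewrite ltr_norml|]; apply/andP; split; lra.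
  by rewrite gu -gt; apply: ht2; rewrite ht0 lexx.
case: (ltP t2 (sup S + e)) => h2; first exact: extend.
have Su : S (sup S + e / 2).
  split; first by apply/andP; split; lra.
  by move=> u /andP[a b]; apply: extend => //; lra.
by have := sup_upper_bound hs Su; lra.
Qed.

Lemma loc_const_interval (lo hi : R) (g : R -> R) :
  (forall t, lo < t < hi -> exists2 e, 0 < e &
     forall d, `|d| < e -> lo < t + d < hi -> g (t + d) = g t) ->
  forall t1 t2, lo < t1 < hi -> lo < t2 < hi -> g t1 = g t2.
Proof.
move=> hloc t1 t2 h1 h2; case: (leP t1 t2) => h.
  by rewrite (loc_const_interval_le hloc h1 h2 h).
by rewrite (loc_const_interval_le hloc h2 h1 (ltW h)).
Qed.

(* A locally invariant property of real numbers holds everywhere as soon as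
   it holds somewhere (its indicator function is locally constant). *)
Lemma loc_invariant (P : R -> Prop) :
  (forall t, exists2 e, 0 < e & forall d, `|d| < e -> (P (t + d) <-> P t)) ->
  forall t1 t2, P t1 -> P t2.
Proof.
move=> hloc t1 t2 h1.
pose g t : R := if pselect (P t) then 1 else 0.
pose B := `|t1| + `|t2| + 1.
have hlc t : - B < t < B -> exists2 e, 0 < e &
    forall d, `|d| < e -> - B < t + d < B -> g (t + d) = g t.
  move=> _; have [e e0 he] := hloc t; exists e => // d hd _.
  rewrite /g; case: (pselect (P (t + d))) => a; case: (pselect (P t)) => b //.
  + by case: b; apply/(he d hd).
  + by case: a; apply/(he d hd).
have inB u : `|u| <= `|t1| + `|t2| -> - B < u < B.
  rewrite ler_norml /B => /andP[a b].
  by have := normr_ge0 t1; have := normr_ge0 t2; move=> *; apply/andP; split; lra.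
have b1 : - B < t1 < B by apply: inB; rewrite lerDl normr_ge0.
have b2 : - B < t2 < B by apply: inB; rewrite lerDr normr_ge0.
have := loc_const_interval hlc b1 b2.
rewrite /g; case: (pselect (P t1)) => [p1|n1]; last by case: n1.
by case: (pselect (P t2)) => [//|n2] /eqP; rewrite oner_eq0.
Qed.

Lemma conv_le (lo a d t : R) : lo <= a -> lo <= a + d -> 0 <= t <= 1 -> lo <= a + t * d.
Proof. by move=> h1 h2 /andP[t0 t1]; nra. Qed.
Lemma conv_lt (lo a d t : R) : lo <= a -> lo < a + d -> 0 < t <= 1 -> lo < a + t * d.
Proof. by move=> h1 h2 /andP[t0 t1]; nra. Qed.
Lemma conv_ge (hi a d t : R) : a <= hi -> a + d <= hi -> 0 <= t <= 1 -> a + t * d <= hi.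
Proof. by move=> h1 h2 /andP[t0 t1]; nra. Qed.
Lemma conv_gt (hi a d t : R) : a <= hi -> a + d < hi -> 0 < t <= 1 -> a + t * d < hi.
Proof. by move=> h1 h2 /andP[t0 t1]; nra. Qed.

Lemma common_margin (a b c d : R) : 0 < a -> 0 < b -> 0 < c -> 0 < d ->
  exists2 mu : R, 0 < mu & [/\ mu * 2 <= a, mu * 2 <= b, mu * 2 <= c & mu * 2 <= d].
Proof.
move=> ha hb hc hd; exists (Num.min (Num.min a b) (Num.min c d) / 2).
  by rewrite divr_gt0 // !lt_min ha hb hc hd.
by rewrite divfK ?pnatr_eq0 //; split; rewrite !ge_min lexx ?orbT.
Qed.

Lemma ball0_coord (e : R) (v : R * R) : 0 < e -> ball0 e v -> `|v.1| < e /\ `|v.2| < e.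
Proof.
rewrite /ball0 => e0 hv.
have h1 : v.1 ^+ 2 < e ^+ 2 by have := sqr_ge0 v.2; lra.
have h2 : v.2 ^+ 2 < e ^+ 2 by have := sqr_ge0 v.1; lra.
split; rewrite ltNge; apply/negP => h.
- by have := real_normK (num_real v.1); move: h1; rewrite !expr2 => h1 hn; nra.
- by have := real_normK (num_real v.2); move: h2; rewrite !expr2 => h2 hn; nra.
Qed.

Lemma ball0_hor (e d : R) : `|d| < e -> ball0 e (d, 0).
Proof.
move=> h; rewrite /ball0 /= expr0n addr0 /=.
by have := normr_ge0 d; rewrite -real_normK ?num_real // !expr2; nra.
Qed.
Lemma ball0_ver (e d : R) : `|d| < e -> ball0 e (0, d).
Proof.
move=> h; rewrite /ball0 /= expr0n add0r /=.
by have := normr_ge0 d; rewrite -real_normK ?num_real // !expr2; nra.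
Qed.

Lemma shear_norm_bound (a b c e : R) : `|a| < e -> `|b| < e -> `|a + c * b| < (1 + `|c|) * e.
Proof.
move=> ha hb; apply: le_lt_trans (ler_normD _ _) _; rewrite normrM.
have : `|c| * `|b| <= `|c| * e by rewrite ler_wpM2l // ltW.
by rewrite mulrDl mul1r; lra.
Qed.

Lemma mapply_parabolic (c : R) (v : R * R) : mapply (parabolic c) v = (v.1 + c * v.2, v.2).
Proof. by rewrite /mapply /parabolic !mxE /= !mul1r mul0r add0r. Qed.

Lemma det_parabolic (c : R) : \det (parabolic c) = 1.
Proof.
rewrite -det_tr det_trig; first by rewrite big_ord_recr big_ord1 /= !mxE /= mul1r.
by apply/is_trig_mxP => i j; rewrite !mxE; case: i => [[|[|i]] hi] //; case: j => [[|[|j]] hj].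
Qed.

Lemma ladder_equation_scaled (k l : nat) (lam : R) : lam != 0 ->
  k%:R * (lam + 1) = l%:R * (lam^-1 + 1 + lam) -> forall n, (0 < n)%N ->
  k%:R * (1 + lam) * lam ^+ n = l%:R * (lam ^+ n.-1 + lam ^+ n + lam ^+ n.+1).
Proof.
move=> lam0 ladder [//|n] _; rewrite (addrC 1 lam) ladder !exprS /=.
by field.
Qed.

End RealFacts.

Definition some_index (P : pred nat) : nat :=
  if pselect (exists j, P j) is left h then xchoose h else 0%N.
Lemma some_indexP (P : pred nat) : (exists j, P j) -> P (some_index P).
Proof. by rewrite /some_index; case: (pselect _) => // h _; exact: xchooseP. Qed.

Section Ladder.
Variable R : realType.
Variable lam : R.
Hypothesis lam_gt0 : 0 < lam.
Local Notation s := (ss lam).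

Lemma ss0 : s 0 = 0. Proof. by rewrite /ss big_ord0. Qed.
Lemma ssS m : s m.+1 = s m + lam ^+ m. Proof. by rewrite /ss big_ord_recr. Qed.
Lemma ss1 : s 1 = 1. Proof. by rewrite ssS ss0 add0r expr0. Qed.
Lemma ss_ge0 m : 0 <= s m.
Proof.
elim: m => [|m IH]; first by rewrite ss0.
by rewrite ssS addr_ge0 // exprn_ge0 // ltW.
Qed.
Lemma ss_ltS m : s m < s m.+1. Proof. by rewrite ssS ltrDl exprn_gt0. Qed.
Lemma ss_ltn m n : (m < n)%N -> s m < s n.
Proof.
elim: n => [//|n IH]; rewrite ltnS leq_eqVlt => /orP [/eqP -> | /IH h]; first exact: ss_ltS.
exact: lt_trans h (ss_ltS n).
Qed.
Lemma ss_ltE m n : (s m < s n) = (m < n)%N.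
Proof.
apply/idP/idP; last exact: ss_ltn.
by apply: contraLR; rewrite -leqNgt -leNgt leq_eqVlt => /orP [/eqP -> // | /ss_ltn /ltW].
Qed.
Lemma ss_leE m n : (s m <= s n) = (m <= n)%N.
Proof. by rewrite leNgt ss_ltE -leqNgt. Qed.
Lemma ss_inj m n : s m = s n -> m = n.
Proof. by move=> e; apply/eqP; rewrite eqn_leq -!ss_leE e lexx. Qed.
Lemma ss_pred_le_SS j : s j.-1 <= s j.+2. Proof. by rewrite ss_leE; lia. Qed.

Lemma idx_lt_lt a b x : s a < x -> x < s b -> (a < b)%N.
Proof. by move=> h1 h2; rewrite -ss_ltE (lt_trans h1 h2). Qed.
Lemma idx_le_lt a b x : s a <= x -> x < s b -> (a < b)%N.
Proof. by move=> h1 h2; rewrite -ss_ltE (le_lt_trans h1 h2). Qed.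
Lemma idx_lt_le a b x : s a < x -> x <= s b -> (a < b)%N.
Proof. by move=> h1 h2; rewrite -ss_ltE (lt_le_trans h1 h2). Qed.
Lemma idx_le_le a b x : s a <= x -> x <= s b -> (a <= b)%N.
Proof. by move=> h1 h2; rewrite -ss_leE (le_trans h1 h2). Qed.

Lemma ss_bracket N x : 0 <= x -> x < s N -> exists2 m, (m < N)%N & s m <= x < s m.+1.
Proof.
elim: N => [|N IH] x0 xN; first by move: (le_lt_trans x0 xN); rewrite ss0 ltxx.
case: (ltP x (s N)) => h; last by exists N => //; rewrite h.
by case: (IH x0 h) => m mN hm; exists m => //; exact: ltnW.
Qed.

Definition in_band j (q : R * R) := (s j < q.2) && (q.2 < s j.+1).
Definition on_cut (q : R * R) := exists j, q.2 = s j.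

Lemma in_band_uniq i j q : in_band i q -> in_band j q -> i = j.
Proof.
move=> /andP[a1 a2] /andP[b1 b2].
by have := idx_lt_lt a1 b2; have := idx_lt_lt b1 a2; lia.
Qed.

Lemma in_band_not_cut j q : in_band j q -> ~ on_cut q.
Proof. by move=> /andP[a1 a2] [i e]; move: a1 a2; rewrite e !ss_ltE; lia. Qed.

Lemma regionE q : in_region lam q <->
  (exists j, in_band j q /\ s j.-1 < q.1 < s j.+2) \/
  (exists j, [/\ (0 < j)%N, q.2 = s j & s j.-1 < q.1 < s j.+1]).
Proof.
split.
- move=> [m [n [/andP[h1 h2] h3 /andP[h4 h5] h6]]].
  move: h4; rewrite le_eqVlt => /orP [/eqP e | h4].
  + right; exists n; split => //.
    * case: n e h3 {h5 h6} => // e; rewrite -e ss0 => h3.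
      by move: (le_lt_trans (ss_ge0 _) h3); rewrite ltxx.
    * rewrite h6 /=; rewrite -e ss_ltE in h3.
      by apply: (lt_le_trans h2); rewrite ss_leE; lia.
  + left; exists n; split; first by rewrite /in_band h4 h5.
    rewrite h6 /=; have := idx_lt_lt h3 h5 => hh.
    by apply: (lt_le_trans h2); rewrite ss_leE; lia.
- case=> [[j [/andP[a1 a2] /andP[b1 b2]]] | [j [j0 e /andP[b1 b2]]]];
    have x0 : 0 <= q.1 by exact: ltW (le_lt_trans (ss_ge0 _) b1).
  + case: (ss_bracket x0 b2) => m mj hm; exists m, j; split => //.
    * by apply: le_lt_trans a1; rewrite ss_leE; lia.
    * by rewrite (ltW a1) a2.
  + case: (ss_bracket x0 b2) => m mj hm; exists m, j; split => //.
    * by rewrite e ss_ltE; lia.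
    * by rewrite e lexx ss_ltS.
Qed.

(* Index arithmetic: after unfolding the band and edge predicates, every
   comparison between values of s, or of one real with two values of s, is
   turned into a comparison of indices and the goal is closed by lia. *)
Ltac split_bounds := repeat match goal with
  | H : is_true ((_ < _) && (_ < _)) |- _ => move/andP: H => [? ?]
  | H : is_true ((_ <= _) && (_ < _)) |- _ => move/andP: H => [? ?]
  | H : is_true ((_ < _) && (_ <= _)) |- _ => move/andP: H => [? ?]
  | H : is_true ((_ <= _) && (_ <= _)) |- _ => move/andP: H => [? ?]
  | H : _ /\ _ |- _ => case: H => [? ?]
  end.

Ltac bound_indices := match goal with
 | H1 : is_true (s ?a < ?x), H2 : is_true (?x < s ?b) |- _ =>
     lazymatch goal with | _ : is_true (a < b)%N |- _ => fail
     | _ => have := idx_lt_lt H1 H2; move=> ? end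
 | H1 : is_true (s ?a <= ?x), H2 : is_true (?x < s ?b) |- _ =>
     lazymatch goal with | _ : is_true (a < b)%N |- _ => fail
     | _ => have := idx_le_lt H1 H2; move=> ? end
 | H1 : is_true (s ?a < ?x), H2 : is_true (?x <= s ?b) |- _ =>
     lazymatch goal with | _ : is_true (a < b)%N |- _ => fail
     | _ => have := idx_lt_le H1 H2; move=> ? end
 | H1 : is_true (s ?a <= ?x), H2 : is_true (?x <= s ?b) |- _ =>
     lazymatch goal with | _ : is_true (a <= b)%N |- _ => fail
     | _ => have := idx_le_le H1 H2; move=> ? end
 end.

Ltac index_arith := unfold in_band, onUH, onUV, onLH, onLV in *; simpl in *; split_bounds;
  repeat match goal with
  | H : ?v = s _ |- _ => is_var v; subst v
  | H : s _ = ?v |- _ => is_var v; subst v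
  end;
  repeat match goal with
  | H : is_true (s _ < s _) |- _ => rewrite ss_ltE in H
  | H : is_true (s _ <= s _) |- _ => rewrite ss_leE in H
  | H : s ?a = s ?b |- _ => move/ss_inj: H => H
  end;
  repeat bound_indices; lia.

Lemma region_not_LH m x y : in_region lam (x, y) -> onLH lam m (x, y) -> False.
Proof. by rewrite regionE /onLH; case=> [[j [h1 h2]]|[j [h0 h1 h2]]] [h3 h4]; index_arith. Qed.
Lemma region_not_LV n x y : in_region lam (x, y) -> onLV lam n (x, y) -> False.
Proof. by rewrite regionE; case=> [[? [? ?]]|[? [? ? ?]]] [? [? ?]]; index_arith. Qed.
Lemma region_not_UH n x y : in_region lam (x, y) -> onUH lam n (x, y) -> False.
Proof. by rewrite regionE; case=> [[? [? ?]]|[? [? ? ?]]] [? [? ?]]; index_arith. Qed.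
Lemma region_not_UV n x y : in_region lam (x, y) -> onUV lam n (x, y) -> False.
Proof. by rewrite regionE; case=> [[? [? ?]]|[? [? ? ?]]] [? ?]; index_arith. Qed.
Lemma LH_notUH m n x y : onLH lam m (x, y) -> onUH lam n (x, y) -> False.
Proof. by move=> [? ?] [? [? ?]]; index_arith. Qed.
Lemma LH_notUV m n x y : onLH lam m (x, y) -> onUV lam n (x, y) -> False.
Proof. by move=> [? ?] [? ?]; index_arith. Qed.
Lemma LV_notUH m n x y : onLV lam m (x, y) -> onUH lam n (x, y) -> False.
Proof. by move=> [? [? ?]] [? [? ?]]; index_arith. Qed.
Lemma LV_notUV m n x y : onLV lam m (x, y) -> onUV lam n (x, y) -> False.
Proof. by move=> [? [? ?]] [? ?]; index_arith. Qed.
Lemma LH_notLV m n x y : onLH lam m (x, y) -> onLV lam n (x, y) -> False.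
Proof. by move=> [? ?] [? [? ?]]; index_arith. Qed.

Lemma region_not_U q : in_region lam q -> onU lam q -> False.
Proof. by case: q => x y h [[n hn]|[n hn]]; [exact: region_not_UH h hn|exact: region_not_UV h hn]. Qed.
Lemma L_notU q : onL lam q -> onU lam q -> False.
Proof.
case: q => x y [[m hm]|[m hm]] [[n hn]|[n hn]];
  [exact: LH_notUH hm hn|exact: LH_notUV hm hn|exact: LV_notUH hm hn|exact: LV_notUV hm hn].
Qed.
Lemma X_notU q : inX lam q -> onU lam q -> False.
Proof. by case=> h; [exact: region_not_U|exact: L_notU]. Qed.

Lemma LH_uniq m m' q : onLH lam m q -> onLH lam m' q -> m = m'.
Proof. by case: q => x y [? ?] [? ?]; apply/eqP; rewrite eqn_leq; apply/andP; split; index_arith. Qed.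

Lemma glueE a b : glueLU lam a b ->
  (exists m, onLH lam m a /\ b = (a.1, s m.+2)) \/
  (exists n, onLV lam n a /\ b = (s n.-2, a.2)).
Proof.
case=> [[m [hm ->]]|[n [hn ->]]].
- by left; exists m; split => //; case: hm => _ ->; congr (_, _); rewrite addrC subrK.
- by right; exists n; split => //; case: hn => _ [-> _]; congr (_, _); rewrite opprB addrC subrK.
Qed.

Lemma glue_onU a b : glueLU lam a b -> onU lam b.
Proof.
move/glueE => [[m [[h1 h2] ->]]|[n [[n0 [h1 h2]] ->]]].
- by left; exists m.+1.
- by right; exists n.-1; split => //=; rewrite prednK.
Qed.

Lemma glue_LH a b m : glueLU lam a b -> onLH lam m a -> b = (a.1, s m.+2).
Proof.
move/glueE => [[m' [hm ->]]|[n [hn ->]]] h; first by rewrite (LH_uniq h hm).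
by case: a h hn => x y h hn; case: (LH_notLV h hn).
Qed.

Lemma glue_UH a b n : glueLU lam a b -> onUH lam n b -> a = (b.1, s n.-2) /\ onLH lam n.-1 a.
Proof.
move/glueE => [[m [hm eb]]|[n' [hn eb]]] hb.
- have e : n = m.+1 by move: hb; rewrite eb /onUH /onLV /= => [[_ [/ss_inj [->] _]]].
  subst n; split => //; case: a hm eb {hb} => x y [h1 h2] ->.
  by congr (_, _).
- by case: a hn eb hb => x y [? [? ?]] -> [? [? ?]]; exfalso; index_arith.
Qed.

Lemma Rep_inPoly x p : Rep lam x p -> inPoly lam p.
Proof.
case=> [->|/glue_onU h]; last by constructor 3.
by case: (svalP x) => h; [constructor 1|constructor 2].
Qed.

Lemma Rep_reg z r : Rep lam z r -> in_region lam r -> sval z = r.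
Proof. by case=> [//|/glue_onU h] hr; case: (region_not_U hr h). Qed.
Lemma Rep_L z r : Rep lam z r -> onL lam r -> sval z = r.
Proof. by case=> [//|/glue_onU h] hr; case: (L_notU hr h). Qed.

Lemma sval_inj (x y : X lam) : sval x = sval y -> x = y.
Proof.
case: x => p hp; case: y => q hq /= e; subst q; congr exist; exact: Prop_irrelevance.
Qed.

(* The circumference of band j: its left side x = s_(j-1) is glued to its
   right side x = s_(j+2). *)
Definition circ j := s j.+2 - s j.-1.
Lemma circ_gt0 j : 0 < circ j.
Proof. by rewrite /circ subr_gt0 ss_ltE; lia. Qed.

Lemma X_band_abscissa q j : inX lam q -> in_band j q -> s j.-1 < q.1 <= s j.+2.
Proof.
case: q => x y [H|[[m hm]|[n hn]]] hb.
- move/regionE: H => [[j' [hb' /andP[a b]]]|[j' [j0 e _]]].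
  + by have e := in_band_uniq hb hb'; subst; rewrite a ltW.
  + by exfalso; apply: (in_band_not_cut hb); exists j'.
- by exfalso; case: hm => _ e; apply: (in_band_not_cut hb); exists m.-1.
- case: hn => [n0 [e hy]]; simpl in *; subst x.
  have e : n = j.+1 by index_arith.
  by subst n; rewrite lexx andbT; move: hb hy => /andP[? ?] /andP[? ?]; rewrite ss_ltE; lia.
Qed.

Lemma inPoly_band_abscissa q j : inPoly lam q -> in_band j q -> s j.-1 <= q.1 <= s j.+2.
Proof.
case: q => x y [H|H|[[n hn]|[n hn]]] hb.
- by move: (X_band_abscissa (or_introl H) hb) => /andP[a b]; rewrite (ltW a) b.
- by move: (X_band_abscissa (or_intror H) hb) => /andP[a b]; rewrite (ltW a) b.
- by exfalso; case: hn => _ [e _]; apply: (in_band_not_cut hb); exists n.+1.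
- case: hn => hy e; simpl in *; subst x.
  have e : n = j by index_arith.
  by subst n; rewrite lexx /= ss_leE; lia.
Qed.

Lemma strip_inPoly q j : in_band j q -> s j.-1 <= q.1 <= s j.+2 -> inPoly lam q.
Proof.
case: q => x y hb /andP[a b]; simpl in *.
move: a; rewrite le_eqVlt => /orP[/eqP e|a].
  by constructor 3; right; exists j; split.
move: b; rewrite le_eqVlt => /orP[/eqP e|b].
  by constructor 2; right; exists j.+1; split => //; split.
by constructor 1; rewrite regionE; left; exists j; split => //; rewrite a b.
Qed.

Lemma strip_inX q j : in_band j q -> s j.-1 < q.1 <= s j.+2 -> inX lam q.
Proof.
case: q => x y hb /andP[a b]; simpl in *.
move: b; rewrite le_eqVlt => /orP[/eqP e|b].
  by right; right; exists j.+1; split => //; split.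
by left; rewrite regionE; left; exists j; split => //; rewrite a b.
Qed.

Lemma X_band_or_cut q : inX lam q -> (exists j, in_band j q) \/ on_cut q.
Proof.
case: q => x y [H|[[m hm]|[n hn]]].
- by move/regionE: H => [[j' [hb' _]]|[j' [j0 e _]]]; [left|right]; exists j'.
- by right; case: hm => _ e; exists m.-1.
- left; exists n.-1; case: hn => n0 [_ /andP [a b]]; rewrite /in_band /= a prednK //.
Qed.

Lemma cut_cases (x : X lam) : on_cut (sval x) ->
  (exists i, [/\ (0 < i)%N, sval x = ((sval x).1, s i) & s i.-1 < (sval x).1 < s i.+1]) \/
  (exists m, sval x = ((sval x).1, s m.-1) /\ s m < (sval x).1 < s m.+1).
Proof.
move=> hB; case: (svalP x) => [/regionE [[j [hb _]]|[i [i0 ey hx]]]|[[m [hx ey]]|[n hn]]].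
- by case: (in_band_not_cut hb hB).
- by left; exists i; split => //; rewrite -ey -surjective_pairing.
- by right; exists m; split => //; rewrite -ey -surjective_pairing.
- case: hn => n0 [_ /andP[a b]]; case: hB => i ei; rewrite ei in a b.
  by exfalso; index_arith.
Qed.

Lemma Rep_in_band x p j : Rep lam x p -> in_band j (sval x) ->
  p = sval x \/ (p = ((sval x).1 - circ j, (sval x).2) /\ (sval x).1 = s j.+2).
Proof.
case=> [->|g hb]; first by left.
right; case/glueE: g => [[m [[_ e] _]]|[n [hn ->]]].
  by exfalso; apply: (in_band_not_cut hb); exists m.-1.
case: hn => n0 [e hy].
have en : n = j.+1 by move: hb hy; rewrite /in_band; move=> /andP[? ?] /andP[? ?]; index_arith.
by subst n; split => //; rewrite e /circ; congr (_, _); rewrite opprB addrC subrK.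
Qed.

Lemma Rep_cutE z r : Rep lam z r -> (on_cut r <-> on_cut (sval z)).
Proof.
case=> [->//|g]; split=> [[i ei]|[i ei]].
- case/glueE: g => [[m [[_ e] _]]|[n [hn eq]]]; first by exists m.-1.
  by exists i; rewrite -ei eq.
- case/glueE: g => [[m [[_ e] ->]]|[n [hn ->]]]; first by exists m.+2.
  by exists i.
Qed.

Lemma Rep_height x p : Rep lam x p -> ~ on_cut (sval x) -> p.2 = (sval x).2.
Proof.
case=> [->//|g] hB.
case/glueE: g => [[m [[_ e] ->]]|[n [hn ->]]] //.
by exfalso; apply: hB; exists m.-1.
Qed.

(* Reduction of an abscissa modulo circ j into (s_(j-1), s_(j+2)]. *)
Definition red j u := u + (Num.floor ((s j.+2 - u) / circ j))%:~R * circ j.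

Lemma red_range j u : s j.-1 < red j u <= s j.+2.
Proof.
rewrite /red; have := floor_itv ((s j.+2 - u) / circ j).
set z := Num.floor _; move=> /andP[a b].
have hW := circ_gt0 j.
rewrite -(ler_pM2r hW) divfK ?gt_eqF // in a.
rewrite -(ltr_pM2r hW) divfK ?gt_eqF // in b.
rewrite intrD mulrDl mul1r in b.
apply/andP; split; last by rewrite -lerBrDl.
by move: b; rewrite /circ -ltrBrDl; lra.
Qed.

Lemma red_per j u (z : int) : red j (u + z%:~R * circ j) = red j u.
Proof.
rewrite /red.
have -> : (s j.+2 - (u + z%:~R * circ j)) / circ j = (s j.+2 - u) / circ j + (- z)%:~R.
  have hW : circ j != 0 by rewrite gt_eqF ?circ_gt0.
  by rewrite intrN; field.
rewrite floorDrz ?intr_int // intrKfloor intrD mulrDl intrN.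
ring.
Qed.

Lemma red_id j u : s j.-1 < u <= s j.+2 -> red j u = u.
Proof.
move=> /andP[a b]; rewrite /red.
have -> : Num.floor ((s j.+2 - u) / circ j) = 0; last by rewrite mul0r addr0.
apply: floor_def; rewrite add0r; apply/andP; split.
  by apply: divr_ge0; [rewrite subr_ge0 | exact: ltW (circ_gt0 j)].
by rewrite ltr_pdivrMr ?circ_gt0 // mul1r /circ; move: a; lra.
Qed.

Lemma red_eq j u : exists z : int, red j u = u + z%:~R * circ j.
Proof. by eexists. Qed.

Lemma red_red j u d : red j (red j u + d) = red j (u + d).
Proof.
rewrite /red; set z := Num.floor ((s j.+2 - u) / circ j).
have -> : u + z%:~R * circ j + d = (u + d) + z%:~R * circ j by ring.
by rewrite -/(red j _) red_per.
Qed.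

Lemma red_low j : red j (s j.-1) = s j.+2.
Proof.
have -> : s j.-1 = s j.+2 + (-1)%:~R * circ j by rewrite /circ; ring.
by rewrite red_per red_id // ss_ltE lexx; apply/andP; split => //; lia.
Qed.

Lemma base_point_inX : inX lam (2^-1, 2^-1).
Proof.
have a : (0:R) < 2^-1 by rewrite invr_gt0 ltr0n.
have b : (2^-1 : R) < 1 by rewrite invf_lt1 // ltr1n.
apply: (@strip_inX _ 0); rewrite /in_band /= ?ss0 ?ss1 ?a ?b //.
rewrite ssS ss1 expr1 /=; apply: le_trans (ltW b) _.
by rewrite lerDl ltW.
Qed.
Definition base_point : X lam := exist _ _ base_point_inX.

Definition mk q : X lam :=
  match pselect (inX lam q) with left h => exist _ q h | right _ => base_point end.
Lemma mkE q : inX lam q -> sval (mk q) = q.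
Proof. by rewrite /mk; case: (pselect _). Qed.

(* Cylinder coordinates on band j: bp j u y is the point at height y whose
   abscissa is u reduced modulo circ j. *)
Definition bp j u y := mk (red j u, y).
Lemma bpE j u y : s j < y < s j.+1 -> sval (bp j u y) = (red j u, y).
Proof. by move=> hy; apply: mkE; apply: (@strip_inX _ j) => //=; exact: red_range. Qed.
Lemma bp_sval x j : in_band j (sval x) -> x = bp j (sval x).1 (sval x).2.
Proof.
move=> hb; apply: sval_inj; rewrite bpE // red_id; last exact: X_band_abscissa (svalP x) hb.
by case: (sval x).
Qed.
Lemma bp_per j u y (z : int) : bp j (u + z%:~R * circ j) y = bp j u y.
Proof. by rewrite /bp red_per. Qed.
Lemma bp_red j u d y : bp j (red j u + d) y = bp j (u + d) y.
Proof. by rewrite /bp red_red. Qed.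
Lemma bp_redc j u y : bp j (red j u) y = bp j u y.
Proof. by have := bp_red j u 0 y; rewrite !addr0. Qed.

Lemma Rep_bp q j : inPoly lam q -> in_band j q -> Rep lam (bp j q.1 q.2) q.
Proof.
move=> hP hb; have /andP[a b] := inPoly_band_abscissa hP hb.
have hy : s j < q.2 < s j.+1 by [].
rewrite /Rep bpE //; move: a; rewrite le_eqVlt => /orP[/eqP e|a].
- right; right; exists j.+1; rewrite -e red_low; split; first by split => //; split.
  by case: q hP hb hy e {b} => x y /= _ _ _ <-; congr (_, _); ring.
- by left; rewrite red_id ?a //; case: q {hP hb hy a b}.
Qed.

Lemma Rep_bp_eq z q j : Rep lam z q -> in_band j q -> z = bp j q.1 q.2.
Proof.
move=> hR hb; case: hR => [e|g]; first by rewrite e in hb *; exact: bp_sval.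
case/glueE: g => [[m [[_ e] eq]]|[n [hn eq]]].
  by exfalso; apply: (in_band_not_cut hb); exists m.+2; rewrite eq.
case: hn => n0 [e1 hy]; rewrite eq in hb *.
have en : n = j.+1 by move: hb hy; rewrite /in_band /=; move=> /andP[? ?] /andP[? ?]; index_arith.
by subst n; rewrite /= -bp_redc red_low -e1 -bp_sval.
Qed.

Lemma Rep_left_side j y : s j < y < s j.+1 -> Rep lam (bp j (s j.+2) y) (s j.-1, y).
Proof.
move=> hy; have hyb : in_band j (s j.-1, y) by [].
rewrite -red_low bp_redc; apply: (Rep_bp _ hyb); apply: (strip_inPoly hyb).
by rewrite /= lexx ss_pred_le_SS.
Qed.

Lemma segment_inPoly p v j : inPoly lam p -> s j <= p.2 <= s j.+1 -> s j.-1 <= p.1 <= s j.+2 ->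
  in_band j (addv p v) -> s j.-1 <= p.1 + v.1 <= s j.+2 ->
  forall t, 0 <= t <= 1 -> inPoly lam (addv p (scalev t v)).
Proof.
move=> hP /andP[a1 a2] /andP[b1 b2] /andP[c1 c2] /andP[d1 d2] t /andP[t0 t1].
move: t0; rewrite le_eqVlt => /orP[/eqP <-|t0].
  by case: p hP {a1 a2 b1 b2 c1 c2 d1 d2} => x y; rewrite /addv /scalev /= !mul0r !addr0.
have ht : 0 < t <= 1 by rewrite t0 t1.
have ht' : 0 <= t <= 1 by rewrite ltW.
apply: (@strip_inPoly _ j); rewrite /in_band /addv /scalev /=.
  by rewrite (conv_lt a1 c1 ht) (conv_gt a2 c2 ht).
by rewrite (conv_le b1 d1 ht') (conv_ge b2 d2 ht').
Qed.

Lemma Dev_strip x p v j : Rep lam x p -> s j <= p.2 <= s j.+1 -> s j.-1 <= p.1 <= s j.+2 ->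
  in_band j (addv p v) -> s j.-1 <= p.1 + v.1 <= s j.+2 ->
  Dev lam x v (bp j (p.1 + v.1) (p.2 + v.2)).
Proof.
move=> hR hp2 hp1 hb hv1; have hseg := segment_inPoly (Rep_inPoly hR) hp2 hp1 hb hv1.
exists p; split => //; have := hseg 1; rewrite lexx ler01 => /(_ isT).
have -> : addv p (scalev 1 v) = addv p v by rewrite /addv /scalev !mul1r.
by move=> hP; exact: Rep_bp hP hb.
Qed.

(* How far bp j u y may move horizontally before reaching a side of the strip
   (the full circumference for the point on the sides). *)
Definition margin j u : R :=
  if red j u < s j.+2 then Num.min (red j u - s j.-1) (s j.+2 - red j u) else circ j.
Lemma margin_gt0 j u : 0 < margin j u.
Proof.
rewrite /margin; case: ifP => h; last exact: circ_gt0.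
by have /andP[a _] := red_range j u; rewrite lt_min !subr_gt0 a h.
Qed.

Lemma band_dev j u y v : s j < y < s j.+1 ->
  `|v.2| < Num.min (y - s j) (s j.+1 - y) -> `|v.1| < margin j u ->
  Dev lam (bp j u y) v (bp j (u + v.1) (y + v.2)).
Proof.
move=> hy hv2 hv1; have /andP[r1 r2] := red_range j u.
move: hv2; rewrite lt_min !ltr_norml => /andP[/andP[e1 e2] /andP[e3 e4]].
have hyc : s j <= y <= s j.+1 by move: hy => /andP[a b]; rewrite !ltW.
have hb p1 : in_band j (addv (p1, y) v) by rewrite /in_band /addv /=; apply/andP; split; lra.
have hr : Rep lam (bp j u y) (red j u, y) by left; rewrite bpE.
have h1 : s j.-1 <= red j u <= s j.+2 by rewrite (ltW r1) r2.
case: (ltP (red j u) (s j.+2)) => hlt.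
- move: hv1; rewrite /margin hlt lt_min !ltr_norml => /andP[/andP[g1 g2] /andP[g3 g4]].
  by rewrite -bp_red; apply: (Dev_strip hr hyc h1 (hb _)); rewrite /=; apply/andP; split; lra.
have eS : red j u = s j.+2 by apply/eqP; rewrite eq_le r2 hlt.
move: hv1; rewrite /margin (ltNge (red j u)) hlt /= ltr_norml /circ => /andP[f1 f2].
case: (lerP v.1 0) => hv.
  by rewrite -bp_red; apply: (Dev_strip hr hyc h1 (hb _)); rewrite /= eS; apply/andP; split; lra.
(* moving right from the right side: continue from the left side *)
have -> : bp j u y = bp j (s j.+2) y by rewrite -bp_redc eS.
have -> : bp j (u + v.1) (y + v.2) = bp j (s j.-1 + v.1) (y + v.2).
  by rewrite -bp_red eS -red_low bp_red.
apply: (Dev_strip (Rep_left_side hy) hyc _ (hb _)); rewrite /= ?lexx ?ss_pred_le_SS //.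
by apply/andP; split; lra.
Qed.

Lemma inPoly_nonneg r : inPoly lam r -> 0 <= r.2.
Proof.
case: r => x y [H|[[m [_ e]]|[n [_ [_ /andP[a _]]]]]|[[n [_ [e _]]]|[m [/andP[a _] _]]]]; rewrite /=.
- move/regionE: H => [[j [/andP[a _] _]]|[j [_ e _]]].
  + exact: ltW (le_lt_trans (ss_ge0 _) a).
  + by rewrite /= in e; rewrite e; exact: ss_ge0.
- by rewrite /= in e; rewrite e; exact: ss_ge0.
- exact: ltW (le_lt_trans (ss_ge0 _) a).
- by rewrite /= in e; rewrite e; exact: ss_ge0.
- exact: ltW (le_lt_trans (ss_ge0 _) a).
Qed.

Lemma inPoly_below r k : inPoly lam r -> r.2 < s k -> r.1 <= s k.+1.
Proof.
case: r => x y [H|[[m hm]|[n hn]]|[[n hn]|[m hm]]] /= hk.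
- move/regionE: H => [[j [? /andP[? b]]]|[j [? e /andP[? b]]]].
  + by apply: ltW (lt_le_trans b _); rewrite ss_leE; index_arith.
  + by apply: ltW (lt_le_trans b _); rewrite ss_leE; index_arith.
- by case: hm => /andP[? b] ?; apply: ltW (lt_le_trans b _); rewrite ss_leE; index_arith.
- by case: hn => ? [e ?]; rewrite /= in e; rewrite e ss_leE; index_arith.
- by case: hn => ? [? /andP[? b]]; apply: ltW (lt_le_trans b _); rewrite ss_leE; index_arith.
- by case: hm => ? e; rewrite /= in e; rewrite e ss_leE; index_arith.
Qed.

Lemma inPoly_above r k : inPoly lam r -> s k < r.2 -> s k.-1 <= r.1.
Proof.
case: r => x y [H|[[m hm]|[n hn]]|[[n hn]|[m hm]]] /= hk.
- move/regionE: H => [[j [? /andP[b ?]]]|[j [? e /andP[b ?]]]].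
  + by apply: ltW (le_lt_trans _ b); rewrite ss_leE; index_arith.
  + by apply: ltW (le_lt_trans _ b); rewrite ss_leE; index_arith.
- by case: hm => /andP[b ?] ?; apply: ltW (le_lt_trans _ b); rewrite ss_leE; index_arith.
- by case: hn => ? [e ?]; rewrite /= in e; rewrite e ss_leE; index_arith.
- by case: hn => ? [? /andP[b ?]]; apply: ltW (le_lt_trans _ b); rewrite ss_leE; index_arith.
- by case: hm => ? e; rewrite /= in e; rewrite e ss_leE; index_arith.
Qed.

(* Near a point x of a cut, every short non-horizontal segment drawn in the
   polygon from a representative p of x enters a band j whose bottom or top
   cut contains p, and p stays mu away from the sides of the strip of j. *)
Definition cut_neighbourhood (x : X lam) (mu : R) : Prop :=
  forall p v, Rep lam x p -> `|v.1| < mu -> `|v.2| < mu -> v.2 != 0 ->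
    inPoly lam (addv p v) ->
    exists j, [/\ in_band j (addv p v), p.2 = s j \/ p.2 = s j.+1,
                  s j.-1 + mu <= p.1 & p.1 <= s j.+2 - mu].

(* An interior point on the cut y = s_i: it has a single representative and
   the segments enter band i - 1 (downwards) or band i (upwards). *)
Lemma cut_local_region x x1 i : sval x = (x1, s i) -> (0 < i)%N -> s i.-1 < x1 < s i.+1 ->
  exists2 mu, 0 < mu & cut_neighbourhood x mu.
Proof.
move=> ex i0 /andP[hx1 hx2].
have hreg : in_region lam (x1, s i) by rewrite regionE; right; exists i; rewrite hx1 hx2.
have h1 : 0 < s i - s i.-1 by rewrite subr_gt0 ss_ltE; lia.
have h2 : 0 < s i.+1 - s i by rewrite subr_gt0 ss_ltS.
have h3 : 0 < x1 - s i.-1 by rewrite subr_gt0.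
have h4 : 0 < s i.+1 - x1 by rewrite subr_gt0.
have [mu mu0 [m1 m2 m3 m4]] := common_margin h3 h4 h1 h2.
exists mu => // p v hR _ hv2 hv0 _.
have -> : p = (x1, s i).
  move: hR; rewrite /Rep ex => -[//|/glueE [[m [hm _]]|[n [hn _]]]]; exfalso.
  + exact: region_not_LH hreg hm.
  + exact: region_not_LV hreg hn.
move: hv2; rewrite ltr_norml => /andP[v1 v2].
have s12 : s i.+1 <= s i.+2 by rewrite ss_leE.
have s01 : s i.-2 <= s i.-1 by rewrite ss_leE leq_pred.
case: (ltrgtP v.2 0) hv0 => // hs _.
- exists i.-1; rewrite /in_band /addv /= prednK //; split; [apply/andP; split|right|..]; lra.
- by exists i; rewrite /in_band /addv /=; split; [apply/andP; split|left|..]; lra.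
Qed.

(* A point of the bottom edge m of L (y = s_(m-1)): from it the segments go
   up into band m - 1, and from its glued copy (y = s_(m+2)) down into band
   m + 1; the polygon does not extend below the edge nor above its copy. *)
Lemma cut_local_edge x x1 m : sval x = (x1, s m.-1) -> s m < x1 < s m.+1 ->
  exists2 mu, 0 < mu & cut_neighbourhood x mu.
Proof.
move=> ex /andP[hx1 hx2].
have hLH : onLH lam m (x1, s m.-1) by split; [rewrite /= hx1 hx2 | by []].
have h1 : 0 < s (m.-1).+1 - s m.-1 by rewrite subr_gt0 ss_ltS.
have h2 : 0 < s m.+2 - s m.+1 by rewrite subr_gt0 ss_ltS.
have h3 : 0 < x1 - s m by rewrite subr_gt0.
have h4 : 0 < s m.+1 - x1 by rewrite subr_gt0.
have [mu mu0 [m1 m2 m3 m4]] := common_margin h3 h4 h1 h2.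
exists mu => // p v hR hv1 hv2 hv0 hP.
move: hv2 hv1; rewrite !ltr_norml => /andP[v1 v2] /andP[w1 w2].
have sa : s m.-2 <= s m by rewrite ss_leE (leq_trans (leq_pred _) (leq_pred _)).
have sb : s m.+1 <= s m.-1.+2 by rewrite ss_leE; case: (m) => //= n; exact: leqnn.
have sc : s m.+1 <= s m.+2 /\ s m.+2 <= s m.+3 by rewrite !ss_leE.
move: hR; rewrite /Rep ex => -[ep|g]; [subst p | have ep := glue_LH g hLH; subst p];
  case: (ltrgtP v.2 0) hv0 => // hs _.
- exfalso; case: (posnP m) => [m0|mp].
    by subst m; have := inPoly_nonneg hP; rewrite /addv /= ss0; lra.
  have := @inPoly_below _ m.-1 hP.
  by rewrite /addv /= prednK //; move=> /(_ ltac:(lra)); lra.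
- by exists m.-1; rewrite /in_band /addv /=; split; [apply/andP; split|left|..]; lra.
- by exists m.+1; rewrite /in_band /addv /=; split; [apply/andP; split|right|..]; lra.
- exfalso; have := @inPoly_above _ m.+2 hP.
  by rewrite /addv /=; move=> /(_ ltac:(lra)); lra.
Qed.

Lemma cut_local x : on_cut (sval x) -> exists2 mu, 0 < mu & cut_neighbourhood x mu.
Proof.
case/cut_cases => [[i [i0 ex hx]]|[m [ex hx]]].
- exact: cut_local_region ex i0 hx.
- exact: cut_local_edge ex hx.
Qed.

Lemma Dev_in_band x j v z : in_band j (sval x) ->
  `|v.2| < Num.min ((sval x).2 - s j) (s j.+1 - (sval x).2) -> Dev lam x v z ->
  z = bp j ((sval x).1 + v.1) ((sval x).2 + v.2).
Proof.
move=> hb hv2 [p [hRp hRz _]].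
have [hp2 [zz hp1]] : p.2 = (sval x).2 /\ exists zz : int, p.1 = (sval x).1 + zz%:~R * circ j.
  case: (Rep_in_band hRp hb) => [->|[-> _]]; split => //.
    by exists 0; rewrite mul0r addr0.
  by exists (-1); rewrite mulN1r.
have hbv : in_band j (addv p v).
  move: hv2; rewrite lt_min !ltr_norml => /andP[/andP[a1 a2] /andP[b1 b2]].
  by rewrite /in_band /addv /= hp2; apply/andP; split; lra.
rewrite (Rep_bp_eq hRz hbv) /= hp1 hp2.
have -> : (sval x).1 + zz%:~R * circ j + v.1 = (sval x).1 + v.1 + zz%:~R * circ j by ring.
by rewrite bp_per.
Qed.

Definition band_index (y : R) := some_index (fun j => (s j < y) && (y < s j.+1)).
Lemma band_indexE j y : s j < y < s j.+1 -> band_index y = j.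
Proof.
move=> h; have := @some_indexP (fun j => (s j < y) && (y < s j.+1)) (ex_intro _ j h).
by rewrite -/(band_index y) => h'; exact: (@in_band_uniq _ _ (0, y) h' h).
Qed.

Definition shear (c : R) (x : X lam) : X lam :=
  if pselect (exists j, in_band j (sval x)) then
    bp (band_index (sval x).2)
       ((sval x).1 + c * ((sval x).2 - s (band_index (sval x).2))) (sval x).2
  else x.

Lemma shear_in_band c x j : in_band j (sval x) ->
  shear c x = bp j ((sval x).1 + c * ((sval x).2 - s j)) (sval x).2.
Proof.
move=> hb; rewrite /shear; case: (pselect _) => [h|[]]; last by exists j.
by rewrite (band_indexE hb).
Qed.

Lemma shear_cut c x : on_cut (sval x) -> shear c x = x.
Proof.
move=> hB; rewrite /shear; case: (pselect _) => // [[j hb]].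
by case: (in_band_not_cut hb hB).
Qed.

Lemma shear_bp c j u y : s j < y < s j.+1 -> shear c (bp j u y) = bp j (u + c * (y - s j)) y.
Proof.
move=> hy; have hb : in_band j (sval (bp j u y)) by rewrite bpE.
by rewrite (shear_in_band _ hb) bpE //= bp_red.
Qed.

Lemma shearK c : cancel (shear c) (shear (- c)).
Proof.
move=> x; case: (X_band_or_cut (svalP x)) => [[j hb]|hB]; last by rewrite !shear_cut.
rewrite (shear_in_band _ hb) shear_bp //.
have -> : (sval x).1 + c * ((sval x).2 - s j) + - c * ((sval x).2 - s j) = (sval x).1 by ring.
by rewrite -bp_sval.
Qed.

Lemma shear_bij c : bijective (shear c).
Proof.
exists (shear (- c)); first exact: shearK.
by move=> x; have := shearK (- c) x; rewrite opprK.
Qed.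

(* Slopes for which the shear glues up across the cuts: the displacement
   c lam^j it produces along the top of band j is a multiple of circ j. *)
Definition twist_compatible (c : R) := forall j, exists z : int, c * lam ^+ j = z%:~R * circ j.

Definition affine_near (f : X lam -> X lam) (A : 'M[R]_2) (x : X lam) : Prop :=
  exists2 e, 0 < e &
    forall v y, ball0 e v -> Dev lam x v y -> Dev lam (f x) (mapply A v) (f y).

Lemma shear_affine_in_band c x j : in_band j (sval x) -> affine_near (shear c) (parabolic c) x.
Proof.
move=> hb; have hy : s j < (sval x).2 < s j.+1 by [].
set x1 := (sval x).1; set y := (sval x).2; set u := x1 + c * (y - s j).
have c0 : 0 < 1 + `|c| by rewrite ltr_pwDl.
set e := Num.min (Num.min (y - s j) (s j.+1 - y)) (margin j u / (1 + `|c|)).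
have e0 : 0 < e.
  by move: hy => /andP[a b]; rewrite /e !lt_min !subr_gt0 a b /= divr_gt0 // margin_gt0.
exists e => // v z hv hD.
have [hv1 hv2] := ball0_coord e0 hv.
have hv2' : `|v.2| < Num.min (y - s j) (s j.+1 - y).
  by apply: lt_le_trans hv2 _; rewrite /e ge_min lexx.
have hv1' : `|v.1 + c * v.2| < margin j u.
  apply: lt_le_trans (shear_norm_bound c hv1 hv2) _.
  by rewrite mulrC -ler_pdivlMr // /e ge_min lexx orbT.
have hyv : s j < y + v.2 < s j.+1.
  by move: hv2'; rewrite lt_min !ltr_norml => /andP[/andP[? ?] /andP[? ?]]; apply/andP; split; lra.
rewrite (Dev_in_band hb hv2' hD) shear_bp // (shear_in_band _ hb) mapply_parabolic -/x1 -/y.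
have -> : x1 + v.1 + c * (y + v.2 - s j) = u + (v.1 + c * v.2) by rewrite /u; ring.
exact: band_dev.
Qed.

(* Crossing into band j from a point p of its bottom or top cut: the offset
   c lam^j picked up from the top cut is a multiple of circ j, so the shear
   acts on the displacement by its linear part only. *)
Lemma shear_crossing c p j (v : R * R) : twist_compatible c -> (p.2 = s j \/ p.2 = s j.+1) ->
  bp j (p.1 + v.1 + c * (p.2 + v.2 - s j)) (p.2 + v.2) = bp j (p.1 + (v.1 + c * v.2)) (p.2 + v.2).
Proof.
move=> hc [->|->]; first by congr bp; ring.
have [z hz] := hc j.
have -> : p.1 + v.1 + c * (s j.+1 + v.2 - s j) = p.1 + (v.1 + c * v.2) + z%:~R * circ j.
  by rewrite -hz ssS; ring.
by rewrite bp_per.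
Qed.

Lemma shear_affine_on_cut c x : twist_compatible c -> on_cut (sval x) ->
  affine_near (shear c) (parabolic c) x.
Proof.
move=> hc hB; have [mu mu0 hmu] := cut_local hB.
have c0 : 0 < 1 + `|c| by rewrite ltr_pwDl.
have e0 : 0 < mu / (1 + `|c|) by rewrite divr_gt0.
have emu : mu / (1 + `|c|) <= mu by rewrite ler_pdivrMr //; have := normr_ge0 c; nra.
exists (mu / (1 + `|c|)) => // v z hv hD; have [p [hRp hRz _]] := hD.
have [hv1 hv2] := ball0_coord e0 hv.
rewrite (shear_cut _ hB) mapply_parabolic.
have [hv0|hv0] := eqVneq v.2 0.
  (* a horizontal move stays on the cut, where the shear is the identity *)
  have hBz : on_cut (sval z).
    apply/(Rep_cutE hRz); have /(Rep_cutE hRp) [i ei] := hB.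
    by exists i; rewrite /addv /= hv0 addr0.
  rewrite (shear_cut _ hBz) hv0 mulr0 addr0.
  by have <- : v = (v.1, 0) by rewrite -hv0 -surjective_pairing.
have [j [hbj hp2 hl hr]] :=
  hmu p v hRp (lt_le_trans hv1 emu) (lt_le_trans hv2 emu) hv0 (Rep_inPoly hRz).
rewrite (Rep_bp_eq hRz hbj) shear_bp // shear_crossing //.
have : `|v.1 + c * v.2| < mu.
  by apply: lt_le_trans (shear_norm_bound c hv1 hv2) _; rewrite mulrC -ler_pdivlMr.
rewrite ltr_norml => /andP[g1 g2].
have hb' : in_band j (addv p (v.1 + c * v.2, v.2)) by exact: hbj.
apply: Dev_strip hRp _ _ hb' _; last (by rewrite /=; apply/andP; split; lra).
  by case: hp2 => ->; rewrite lexx ?andbT ?ltW // ss_ltS.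
by apply/andP; split; lra.
Qed.

Lemma shear_affine_homeo c : twist_compatible c -> affine_homeo lam (shear c) (parabolic c).
Proof.
move=> hc; split; first exact: shear_bij.
move=> x; case: (X_band_or_cut (svalP x)) => [[j hb]|hB].
- exact: shear_affine_in_band hb.
- exact: shear_affine_on_cut hc hB.
Qed.

Definition bchart j (ab : R * R) : X lam := bp j ab.1 (s j + ab.2).

Lemma bchart_band j (b : R) : 0 < b < lam ^+ j -> s j < s j + b < s j.+1.
Proof. by rewrite ssS => /andP[b0 b1]; rewrite ltrDl ltrD2l b0 b1. Qed.

Lemma band_chart j : horiz_cyl_chart lam (circ j) (lam ^+ j) (bchart j).
Proof.
have h0 : 0 < lam ^+ j by rewrite exprn_gt0.
split => //; first exact: circ_gt0.
- move=> a b a' b' hb hb'; split.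
  + move=> e; have := f_equal sval e; rewrite /bchart /= !bpE ?bchart_band //.
    case=> e1 /addrI eb; split => //.
    have [z1 hz1] := red_eq j a; have [z2 hz2] := red_eq j a'.
    exists (z1 - z2); rewrite intrD intrN mulrDl mulNr.
    by move: e1; rewrite hz1 hz2 => e1; lra.
  + by case=> <- [z ->]; rewrite /bchart /= bp_per.
- move=> a b hb; have hy := bchart_band hb.
  have e0 : 0 < Num.min (Num.min b (lam ^+ j - b)) (margin j a).
    by move: hb => /andP[u1 u2]; rewrite !lt_min u1 subr_gt0 u2 margin_gt0.
  exists (Num.min (Num.min b (lam ^+ j - b)) (margin j a)) => // v hv.
  have [hv1 hv2] := ball0_coord e0 hv.
  have hv2' : `|v.2| < Num.min (s j + b - s j) (s j.+1 - (s j + b)).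
    have -> : s j + b - s j = b by ring.
    have -> : s j.+1 - (s j + b) = lam ^+ j - b by rewrite ssS; ring.
    by apply: lt_le_trans hv2 _; rewrite ge_min lexx.
  have hv1' : `|v.1| < margin j a by apply: lt_le_trans hv1 _; rewrite ge_min lexx orbT.
  by have := band_dev hy hv2' hv1'; rewrite /bchart /= addrA.
Qed.

Lemma band_same j : same_set lam (band lam j) (cyl_set lam (lam ^+ j) (bchart j)).
Proof.
move=> x; split.
- move=> hb; exists (sval x).1, ((sval x).2 - s j); split.
    by move: hb; rewrite /band ssS => /andP[a b]; apply/andP; split; lra.
  rewrite /bchart /=; have -> : s j + ((sval x).2 - s j) = (sval x).2 by ring.
  exact: bp_sval.
- by move=> [a [b [hb ->]]]; rewrite /band /bchart /= bpE /=; exact: bchart_band.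
Qed.

Lemma band_cyl j : is_horiz_cyl lam (band lam j).
Proof. by exists (circ j), (lam ^+ j), (bchart j); split; [exact: band_chart | exact: band_same]. Qed.

Lemma shear_twist c j (m : nat) : m%:R * circ j = c * lam ^+ j ->
  twist_power lam (shear c) m (circ j) (lam ^+ j) (bchart j).
Proof.
move=> ew a b hb; rewrite /bchart /= shear_bp; last exact: bchart_band.
have hl : lam ^+ j != 0 by rewrite expf_neq0 // gt_eqF.
congr bp; rewrite ew; have -> : s j + b - s j = b by ring.
by field.
Qed.

Definition low_index (x : R) := some_index (fun i => (s i <= x) && (x < s i.+1)).
Lemma low_indexE i x : s i <= x < s i.+1 -> low_index x = i.
Proof.
move=> h; have := @some_indexP (fun i => (s i <= x) && (x < s i.+1)) (ex_intro _ i h).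
rewrite -/(low_index x) => /andP[a b]; move: h => /andP[c d].
by have := idx_le_lt a d; have := idx_le_lt c b; lia.
Qed.

(* The distance from a point q of a cut to the right end of the open cut
   segment containing it. *)
Definition cut_gap (q : R * R) : R :=
  if pselect (in_region lam q) then s (low_index q.2).+1 - q.1
  else s (low_index q.1).+1 - q.1.

Lemma cut_gap_region q i : in_region lam q -> q.2 = s i -> cut_gap q = s i.+1 - q.1.
Proof.
move=> h e; rewrite /cut_gap; case: (pselect _) => [hr|nr]; last by case: nr.
by have -> : low_index q.2 = i by apply: low_indexE; rewrite e lexx ss_ltS.
Qed.

Lemma cut_gap_LH q m : onLH lam m q -> cut_gap q = s m.+1 - q.1.
Proof.
move=> h; rewrite /cut_gap; case: (pselect _) => [hr|nr].
  by case: q h hr => x y h hr; case: (region_not_LH hr h).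
case: h => /andP[a b] _.
by have -> : low_index q.1 = m by apply: low_indexE; rewrite (ltW a) b.
Qed.

Definition gap_slides (x : X lam) : Prop :=
  0 < cut_gap (sval x) /\
  exists2 mu, 0 < mu & forall p t z, Rep lam x p -> `|t| < mu ->
    Rep lam z (addv p (t, 0)) -> cut_gap (sval z) = cut_gap (sval x) - t.

Lemma gap_slides_region x x1 i : sval x = (x1, s i) -> (0 < i)%N -> s i.-1 < x1 < s i.+1 ->
  gap_slides x.
Proof.
move=> ex i0 /andP[hx1 hx2].
have hreg : in_region lam (x1, s i) by rewrite regionE; right; exists i; rewrite hx1 hx2.
rewrite /gap_slides ex (@cut_gap_region _ i hreg (erefl _)) /=; split; first by rewrite subr_gt0.
exists (Num.min (x1 - s i.-1) (s i.+1 - x1)); first by rewrite lt_min !subr_gt0 hx1 hx2.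
move=> p t z hR; rewrite lt_min !ltr_norml => /andP[/andP[a1 a2] /andP[b1 b2]] hz.
have ep : p = (x1, s i).
  move: hR; rewrite /Rep ex => -[//|/glueE [[m [hm _]]|[n [hn _]]]]; exfalso.
  + exact: region_not_LH hreg hm.
  + exact: region_not_LV hreg hn.
subst p.
have hr : in_region lam (addv (x1, s i) (t, 0)).
  by rewrite regionE; right; exists i; rewrite /addv /= addr0; split => //; apply/andP; split; lra.
by rewrite (Rep_reg hz hr) (@cut_gap_region _ i hr) /addv /= ?addr0 //; ring.
Qed.

Lemma gap_slides_edge x x1 m : sval x = (x1, s m.-1) -> s m < x1 < s m.+1 -> gap_slides x.
Proof.
move=> ex /andP[hx1 hx2].
have hLH : onLH lam m (x1, s m.-1) by split; [rewrite /= hx1 hx2 | by []].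
rewrite /gap_slides ex (cut_gap_LH hLH) /=; split; first by rewrite subr_gt0.
exists (Num.min (x1 - s m) (s m.+1 - x1)); first by rewrite lt_min !subr_gt0 hx1 hx2.
move=> p t z hR; rewrite lt_min !ltr_norml => /andP[/andP[a1 a2] /andP[b1 b2]] hz.
have hLH' : onLH lam m (x1 + t, s m.-1) by split => //=; apply/andP; split; lra.
move: hR; rewrite /Rep ex => -[ep|g].
- subst p; have e : addv (x1, s m.-1) (t, 0) = (x1 + t, s m.-1) by rewrite /addv /= addr0.
  rewrite e in hz; rewrite (Rep_L hz (or_introl (ex_intro _ m hLH'))) (cut_gap_LH hLH') /=.
  by ring.
(* from the glued copy on the cut y = s_(m+2), the move stays on the copy *)
have ep := glue_LH g hLH; subst p.
have hU : onUH lam m.+1 (addv (x1, s m.+2) (t, 0)).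
  split => //; split; first by rewrite /addv /= addr0.
  by rewrite /addv /=; apply/andP; split; lra.
case: hz => [ez|gz].
  exfalso; apply: (@X_notU (addv (x1, s m.+2) (t, 0))); first by rewrite ez; exact: svalP.
  by left; exists m.+1.
have [ez _] := glue_UH gz hU.
by rewrite ez /= (cut_gap_LH hLH') /=; ring.
Qed.

Lemma gap_slides_cut x : on_cut (sval x) -> gap_slides x.
Proof.
case/cut_cases => [[i [i0 ex hx]]|[m [ex hx]]].
- exact: gap_slides_region ex i0 hx.
- exact: gap_slides_edge ex hx.
Qed.

(* Along the horizontal closed curves of a cylinder chart, being on a cut is
   locally invariant, hence invariant. *)
Lemma chart_cut_line w h (ph : R * R -> X lam) a b : horiz_cyl_chart lam w h ph -> 0 < b < h ->
  on_cut (sval (ph (a, b))) -> forall t, on_cut (sval (ph (a + t, b))).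
Proof.
move=> [_ _ _ hdev] hb hB t.
apply: (@loc_invariant _ (fun t => on_cut (sval (ph (a + t, b)))) _ 0); last by rewrite addr0.
move=> t'; have [e e0 he] := hdev (a + t') b hb; exists e => // d hd.
have [p [hR1 hR2 _]] := he (d, 0) (ball0_hor hd).
rewrite /= addr0 -addrA in hR2.
rewrite -(Rep_cutE hR2) -(Rep_cutE hR1).
by split; case=> i ei; exists i; move: ei; rewrite /addv /= addr0.
Qed.

(* A cylinder chart never meets a cut: its horizontal curve would run along
   cuts forever, whereas cut_gap decreases at unit speed and stays positive. *)
Lemma chart_avoids_cuts w h (ph : R * R -> X lam) a b : horiz_cyl_chart lam w h ph ->
  0 < b < h -> ~ on_cut (sval (ph (a, b))).
Proof.
move=> hc hb hB; have hall := chart_cut_line hc hb hB.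
case: hc => [_ _ _ hdev].
set T := cut_gap (sval (ph (a, b))).
have T0 : 0 < T by case: (gap_slides_cut hB).
pose g t := cut_gap (sval (ph (a + t, b))) + t.
have hloc t : -1 < t < T + 1 -> exists2 e, 0 < e &
    forall d, `|d| < e -> -1 < t + d < T + 1 -> g (t + d) = g t.
  move=> _; have [_ [mu mu0 hmu]] := gap_slides_cut (hall t).
  have [e e0 he] := hdev (a + t) b hb.
  exists (Num.min e mu); first by rewrite lt_min e0 mu0.
  move=> d; rewrite lt_min => /andP[d1 d2] _.
  have [p [hR1 hR2 _]] := he (d, 0) (ball0_hor d1).
  rewrite /= addr0 -addrA in hR2.
  by rewrite /g (hmu p d _ hR1 d2 hR2); ring.
have i0 : -1 < (0 : R) < T + 1 by apply/andP; split; lra.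
have iT : -1 < T < T + 1 by apply/andP; split; lra.
have := loc_const_interval hloc i0 iT; rewrite /g !addr0 -/T => e.
by have [h1 _] := gap_slides_cut (hall T); lra.
Qed.

Lemma chart_height_shift w h (ph : R * R -> X lam) a b : horiz_cyl_chart lam w h ph -> 0 < b < h ->
  exists2 e, 0 < e & forall v, ball0 e v -> 0 < b + v.2 < h ->
    (sval (ph (a + v.1, b + v.2))).2 = (sval (ph (a, b))).2 + v.2.
Proof.
move=> hc hb; have [_ _ _ hdev] := hc.
have [e e0 he] := hdev a b hb; exists e => // v hv hb'.
have [p [hR1 hR2 _]] := he v hv.
have e1 := Rep_height hR1 (chart_avoids_cuts (a:=a) hc hb).
have e2 := Rep_height hR2 (chart_avoids_cuts (a:=a + v.1) hc hb').
by rewrite -e2 -e1.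
Qed.

Lemma chart_height_indep w h (ph : R * R -> X lam) a b : horiz_cyl_chart lam w h ph ->
  0 < b < h -> (sval (ph (a, b))).2 = (sval (ph (0, b))).2.
Proof.
move=> hc hb; pose Y t := (sval (ph (t, b))).2.
have hloc t : - `|a| - 1 < t < `|a| + 1 -> exists2 e, 0 < e &
    forall d, `|d| < e -> - `|a| - 1 < t + d < `|a| + 1 -> Y (t + d) = Y t.
  move=> _; have [e e0 he] := chart_height_shift t hc hb; exists e => // d hd _.
  by have := he (d, 0) (ball0_hor hd); rewrite /= !addr0; apply.
have := normr_ge0 a; have : - `|a| <= a <= `|a| by rewrite -ler_norml.
move=> /andP[u1 u2] a0.
have i1 : - `|a| - 1 < a < `|a| + 1 by apply/andP; split; lra.
have i2 : - `|a| - 1 < (0 : R) < `|a| + 1 by apply/andP; split; lra.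
exact: (loc_const_interval hloc i1 i2).
Qed.

Lemma chart_height_slope w h (ph : R * R -> X lam) b : horiz_cyl_chart lam w h ph ->
  0 < b < h -> (sval (ph (0, b))).2 - b = (sval (ph (0, h / 2))).2 - h / 2.
Proof.
move=> hc hb; pose Y t := (sval (ph (0, t))).2 - t.
have hloc t : 0 < t < h -> exists2 e, 0 < e &
    forall d, `|d| < e -> 0 < t + d < h -> Y (t + d) = Y t.
  move=> ht; have [e e0 he] := chart_height_shift 0 hc ht; exists e => // d hd htd.
  have := he (0, d) (ball0_ver hd); rewrite /Y /= !addr0 => ->; first ring.
  exact: htd.
have hh2 : 0 < h / 2 < h by case: hc => _ h0 _ _; apply/andP; split; lra.
exact: (loc_const_interval hloc hb hh2).
Qed.

Lemma chart_in_band w h (ph : R * R -> X lam) : horiz_cyl_chart lam w h ph ->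
  exists n, forall a b, 0 < b < h -> in_band n (sval (ph (a, b))).
Proof.
move=> hc; have hh2 : 0 < h / 2 < h by case: hc => _ h0 _ _; apply/andP; split; lra.
set K := (sval (ph (0, h / 2))).2 - h / 2.
have hY a b : 0 < b < h -> (sval (ph (a, b))).2 = b + K.
  move=> hb; rewrite (chart_height_indep a hc hb).
  by have := chart_height_slope hc hb; rewrite -/K; lra.
case: (X_band_or_cut (svalP (ph (0, h / 2)))) => [[n hn]|hB].
  2: by case: (chart_avoids_cuts (a:=0) hc hh2 hB).
have /andP[n1 n2] : s n < h / 2 + K < s n.+1 by rewrite -(hY 0 _ hh2).
(* the heights s_n - K and s_(n+1) - K of the cuts are outside (0, h) *)
exists n => a b hb; rewrite /in_band (hY a b hb); apply/andP; split; rewrite ltNge; apply/negP => hle.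
- have hb' : 0 < s n - K < h by move: hb => /andP[u1 u2]; apply/andP; split; lra.
  by apply: (chart_avoids_cuts (a:=0) hc hb'); exists n; rewrite (hY 0 _ hb'); ring.
- have hb' : 0 < s n.+1 - K < h by move: hb => /andP[u1 u2]; apply/andP; split; lra.
  by apply: (chart_avoids_cuts (a:=0) hc hb'); exists n.+1; rewrite (hY 0 _ hb'); ring.
Qed.

Lemma mid_band j : s j < (s j + s j.+1) / 2 < s j.+1.
Proof. by have := ss_ltS j; move=> h; apply/andP; split; lra. Qed.

Lemma band_max_cyl j : is_max_horiz_cyl lam (band lam j).
Proof.
split; first exact: band_cyl.
move=> D [w [h [ph [hc hs]]]] hsub x; split; first exact: hsub.
have [n hn] := chart_in_band hc.
pose x0 := bp j 0 ((s j + s j.+1) / 2).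
have hx0 : band lam j x0 by rewrite /band bpE ?mid_band //=; exact: mid_band.
have [a [b [hb ex0]]] := (hs x0).1 (hsub _ hx0).
have ejn : n = j by apply: (in_band_uniq (hn a b hb)); rewrite -ex0.
by move=> /hs [a' [b' [hb' ->]]]; rewrite -ejn; exact: hn.
Qed.

Lemma max_cyl_band C : is_max_horiz_cyl lam C -> exists n, same_set lam C (band lam n).
Proof.
move=> [[w [h [ph [hc hs]]]] hmax].
have [n hn] := chart_in_band hc; exists n.
by apply: hmax (band_cyl n) _ => x /hs [a [b [hb ->]]]; exact: hn.
Qed.

Lemma band_twist_cylinder c j (m : nat) : m%:R * circ j = c * lam ^+ j ->
  is_max_horiz_cyl lam (band lam j) /\
  exists phi, [/\ horiz_cyl_chart lam (circ j) (lam ^+ j) phi,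
                  same_set lam (band lam j) (cyl_set lam (lam ^+ j) phi) &
                  twist_power lam (shear c) m (circ j) (lam ^+ j) phi].
Proof.
move=> ew; split; first exact: band_max_cyl.
by exists (bchart j); split; [exact: band_chart | exact: band_same | exact: shear_twist].
Qed.

(* Every point is in the closure of a band: points of bands trivially, points
   of cuts by pushing them slightly upwards. *)
Lemma Dev_zero x : Dev lam x (0, 0) x.
Proof.
have e q : addv q (0, 0) = q by case: q => a b; rewrite /addv /= !addr0.
exists (sval x); split; [by left | by left; rewrite e |].
move=> t _; have -> : scalev t (0, 0) = (0, 0) by rewrite /scalev /= mulr0.
by rewrite e; apply: (@Rep_inPoly x); left.
Qed.

Lemma cut_point_closure x j : (sval x).2 = s j -> s j.-1 <= (sval x).1 <= s j.+2 ->
  in_closure lam (band lam j) x.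
Proof.
move=> ej hj e e0; have hH := ss_ltS j.
set d := Num.min e (s j.+1 - s j) / 2.
have [de dh] : d < e /\ d < s j.+1 - s j.
  have := ge_min e e (s j.+1 - s j); have := ge_min (s j.+1 - s j) e (s j.+1 - s j).
  by rewrite !lexx orbT /d; lra.
have d0 : 0 < d by rewrite divr_gt0 // lt_min e0 subr_gt0.
have hb : in_band j (addv (sval x) (0, d)) by rewrite /in_band /addv /= ej; apply/andP; split; lra.
have hp2 : s j <= (sval x).2 <= s j.+1 by rewrite ej lexx ltW.
have hp1 : s j.-1 <= (sval x).1 + (0, d).1 <= s j.+2 by rewrite /= addr0.
exists (0, d), (bp j ((sval x).1 + 0) ((sval x).2 + d)); split.
- by apply: ball0_ver; rewrite gtr0_norm.
- by apply: (Dev_strip _ hp2 hj hb hp1); left.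
- by rewrite /band bpE /=; exact: hb.
Qed.

Lemma closure_band x : exists j, in_closure lam (band lam j) x.
Proof.
case: (X_band_or_cut (svalP x)) => [[j hb]|/cut_cases [[i [_ ex hx]]|[m [ex hx]]]].
- exists j => e e0; exists (0, 0), x; split => //; last exact: Dev_zero.
  by rewrite /ball0 /= expr0n add0r exprn_gt0.
- exists i; apply: cut_point_closure; first by rewrite {1}ex.
  have : s i.+1 <= s i.+2 by rewrite ss_leE.
  by move: hx => /andP[a b] c; apply/andP; split; lra.
- exists m.-1; apply: cut_point_closure; first by rewrite {1}ex.
  have : s m.-2 <= s m by rewrite ss_leE (leq_trans (leq_pred _) (leq_pred _)).
  have : s m.+1 <= s m.-1.+2 by rewrite ss_leE; case: (m) => //= n; exact: leqnn.
  by move: hx => /andP[a b] c c'; apply/andP; split; lra.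
Qed.

Lemma cylinder_decomposition : horiz_cyl_decomposition lam (is_max_horiz_cyl lam).
Proof.
split => //.
- move=> C D hC hD [x [hCx hDx]].
  have [n hn] := max_cyl_band hC; have [n' hn'] := max_cyl_band hD.
  have e : n = n' by apply: (in_band_uniq ((hn x).1 hCx) ((hn' x).1 hDx)).
  by subst n'; move=> y; rewrite hn hn'.
- by move=> x; have [j hj] := closure_band x; exists (band lam j); split => //; exact: band_max_cyl.
Qed.

Lemma circ0 : circ 0 = 1 + lam.
Proof. by rewrite /circ /= !ssS ss0 expr0 expr1; ring. Qed.

Lemma circS n : (0 < n)%N -> circ n = lam ^+ n.-1 + lam ^+ n + lam ^+ n.+1.
Proof. by case: n => // n _; rewrite /circ /= !ssS; ring. Qed.

End Ladder.

Theorem mainTheorem6 (R : realType) (k l : nat) (lam : R) :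
  (0 < l)%N -> (l < k)%N -> coprime k l ->
  0 < lam -> k%:R * (lam + 1) = l%:R * (lam^-1 + 1 + lam) ->
  horiz_cyl_decomposition lam (is_max_horiz_cyl lam) /\
  in_Veech lam (parabolic (k%:R * (1 + lam))) /\
  exists f : X lam -> X lam,
    [/\ affine_homeo lam f (parabolic (k%:R * (1 + lam))),
        (* bottom horizontal cylinder: height 1, circumference 1 + lam *)
        is_max_horiz_cyl lam (band lam 0) /\
        (exists phi, [/\ horiz_cyl_chart lam (1 + lam) 1 phi,
                         same_set lam (band lam 0) (cyl_set lam 1 phi) &
                         twist_power lam f k (1 + lam) 1 phi]),
        (* every other horizontal cylinder: height lam^n,
           circumference lam^(n-1) + lam^n + lam^(n+1), n >= 1 *)
        (forall n : nat, (0 < n)%N ->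
           is_max_horiz_cyl lam (band lam n) /\
           exists phi,
             [/\ horiz_cyl_chart lam (lam ^+ n.-1 + lam ^+ n + lam ^+ n.+1) (lam ^+ n) phi,
                 same_set lam (band lam n) (cyl_set lam (lam ^+ n) phi) &
                 twist_power lam f l (lam ^+ n.-1 + lam ^+ n + lam ^+ n.+1) (lam ^+ n) phi]) &
        (* these bands are all the maximal horizontal cylinders *)
        (forall C, is_max_horiz_cyl lam C -> exists n : nat, same_set lam C (band lam n))].
Proof.
move=> _ _ _ lam0 ladder; have lamN0 : lam != 0 by rewrite gt_eqF.
pose c := k%:R * (1 + lam).
(* the shear of slope c twists band 0 k times and every other band l times *)
have twist0 : k%:R * circ lam 0 = c * lam ^+ 0 by rewrite circ0 expr0 mulr1.
have twistS n : (0 < n)%N -> l%:R * circ lam n = c * lam ^+ n.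
  by move=> n0; rewrite circS // -(ladder_equation_scaled lamN0 ladder n0).
have compat : twist_compatible lam c.
  by case=> [|n]; [exists k; rewrite -twist0 | exists l; rewrite -twistS].
have hf := shear_affine_homeo lam0 compat.
split; first exact: (cylinder_decomposition lam0).
split.
  by exists (shear lam0 c), (parabolic c); split => //; [rewrite det_parabolic ltr01 | left].
exists (shear lam0 c); split => //.
- by have := band_twist_cylinder lam0 twist0; rewrite circ0 expr0.
- by move=> n n0; have := band_twist_cylinder lam0 (twistS n n0); rewrite circS.
- exact: (max_cyl_band lam0).
Qed.
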